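(* Let $U$ be an infinite-dimensional vector space over a (not necessarily commutative) field $K$ and let $R:=\mathrm{End}_K(U)$. Then the projective line $\mathbb{P}(R)$ is connected and its diameter (with respect to the distant relation) is exactly $3$.
   Context: For a ring $R$ with $1$, a pair $(a,b)\in R^2$ is admissible if it is the first row of some invertible $2\times2$ matrix over $R$. The projective line $\mathbb{P}(R)$ is the set of all cyclic submodules $R(a,b)$ of the left $R$-module $R^2$ with $(a,b)$ admissible. Two points $R(a,b)$, $R(c,d)$ are distant iff $\begin{pmatrix}a&b\\c&d\end{pmatrix}$ is invertible. The distant graph has vertex set $\mathbb{P}(R)$ and edges the pairs of distant points; $\mathbb{P}(R)$ is connected if this graph is connected, the distance between two points is the least number of edges of a path joining them, and the diameter is the supremum of distances between points of $\mathbb{P}(R)$. *)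

From HB Require Import structures.
From mathcomp Require Import all_boot all_order all_algebra.
From Stdlib Require Import ClassicalEpsilon FunctionalExtensionality ProofIrrelevance.
Set Implicit Arguments. Unset Strict Implicit. Unset Printing Implicit Defensive.
Import GRing.Theory.
Local Open Scope ring_scope.

Definition is_division_ring (K : unitRingType) : Prop :=
  forall x : K, x != 0 -> x \is a GRing.unit.

Definition lin_indep (K : pzRingType) (U : lmodType K) (n : nat) (v : 'I_n -> U) :=
  forall c : 'I_n -> K, \sum_(i < n) c i *: v i = 0 -> forall i, c i = 0.

Definition infinite_dim (K : pzRingType) (U : lmodType K) : Prop :=
  forall n : nat, exists v : 'I_n -> U, lin_indep v.

Section Endo.
Variables (K : pzRingType) (U : lmodType K).

Record endo := Endo {
  endo_fun :> U -> U;
  endo_add : forall x y, endo_fun (x + y) = endo_fun x + endo_fun y;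
  endo_scale : forall (a : K) x, endo_fun (a *: x) = a *: endo_fun x }.

Lemma endo_ext (f g : endo) : (forall x, f x = g x) -> f = g.
Proof.
case: f g => f fa fs [g ga gs] /= H.
have E : f = g by apply: functional_extensionality.
subst g; f_equal; apply: proof_irrelevance.
Qed.

Definition endo_eqb (f g : endo) : bool :=
  if excluded_middle_informative (f = g) then true else false.
Lemma endo_eqP : Equality.axiom endo_eqb.
Proof.
move=> f g; rewrite /endo_eqb.
by case: excluded_middle_informative => H; constructor.
Qed.
HB.instance Definition _ := hasDecEq.Build endo endo_eqP.

Definition endo_find (P : pred endo) (n : nat) : option endo :=
  match excluded_middle_informative (exists x, P x) with
  | left h => Some (proj1_sig (constructive_indefinite_description _ h))
  | right _ => None
  end.
Lemma endo_find_correct P n x : endo_find P n = Some x -> P x.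
Proof.
rewrite /endo_find; case: excluded_middle_informative => // h [<-].
exact: proj2_sig (constructive_indefinite_description _ h).
Qed.
Lemma endo_find_complete (P : pred endo) :
  (exists x, P x) -> exists n, endo_find P n.
Proof.
by move=> h; exists 0%N; rewrite /endo_find; case: excluded_middle_informative.
Qed.
Lemma endo_find_ext (P Q : pred endo) : P =1 Q -> endo_find P =1 endo_find Q.
Proof.
by move=> H; have -> : P = Q by apply: functional_extensionality.
Qed.
HB.instance Definition _ :=
  hasChoice.Build endo endo_find_correct endo_find_complete endo_find_ext.

Program Definition endo0 : endo := @Endo (fun _ => 0) _ _.
Next Obligation. by rewrite addr0. Qed.
Next Obligation. by rewrite scaler0. Qed.
Program Definition endo_opp (f : endo) : endo := @Endo (fun x => - f x) _ _.
Next Obligation. by rewrite endo_add opprD. Qed.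
Next Obligation. by rewrite endo_scale scalerN. Qed.
Program Definition endo_addf (f g : endo) : endo := @Endo (fun x => f x + g x) _ _.
Next Obligation. by rewrite !endo_add addrACA. Qed.
Next Obligation. by rewrite !endo_scale scalerDr. Qed.
Program Definition endo1 : endo := @Endo (fun x => x) _ _.
Program Definition endo_mul (f g : endo) : endo := @Endo (fun x => f (g x)) _ _.
Next Obligation. by rewrite !endo_add. Qed.
Next Obligation. by rewrite !endo_scale. Qed.

Lemma endo_addA : associative endo_addf.
Proof. by move=> f g h; apply: endo_ext => x /=; rewrite addrA. Qed.
Lemma endo_addC : commutative endo_addf.
Proof. by move=> f g; apply: endo_ext => x /=; rewrite addrC. Qed.
Lemma endo_add0 : left_id endo0 endo_addf.
Proof. by move=> f; apply: endo_ext => x /=; rewrite add0r. Qed.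
Lemma endo_addN : left_inverse endo0 endo_opp endo_addf.
Proof. by move=> f; apply: endo_ext => x /=; rewrite addNr. Qed.
HB.instance Definition _ :=
  GRing.isZmodule.Build endo endo_addA endo_addC endo_add0 endo_addN.

Lemma endo_mulA : associative endo_mul.
Proof. by move=> f g h; apply: endo_ext. Qed.
Lemma endo_mul1 : left_id endo1 endo_mul.
Proof. by move=> f; apply: endo_ext. Qed.
Lemma endo_mulr1 : right_id endo1 endo_mul.
Proof. by move=> f; apply: endo_ext. Qed.
Lemma endo_mulDl : left_distributive endo_mul endo_addf.
Proof. by move=> f g h; apply: endo_ext. Qed.
Lemma endo_mulDr : right_distributive endo_mul endo_addf.
Proof. by move=> f g h; apply: endo_ext => x /=; rewrite endo_add. Qed.
HB.instance Definition _ :=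
  GRing.Zmodule_isPzRing.Build endo endo_mulA endo_mul1 endo_mulr1 endo_mulDl endo_mulDr.

End Endo.


Section ProjLine.
Variable R : pzRingType.

Definition mx2 (a b c d : R) : 'M[R]_2 :=
  \matrix_(i < 2, j < 2)
    if (i == 0 :> nat) then (if (j == 0 :> nat) then a else b)
    else (if (j == 0 :> nat) then c else d).

Definition invertible2 (M : 'M[R]_2) : Prop :=
  exists N : 'M[R]_2, M *m N = 1%:M /\ N *m M = 1%:M.

Definition admissible (a b : R) : Prop :=
  exists c d : R, invertible2 (mx2 a b c d).

Definition cyc (a b : R) : R * R -> Prop :=
  fun x => exists r : R, x = (r * a, r * b).

Definition point : Type :=
  { S : R * R -> Prop | exists a b : R, admissible a b /\ S = cyc a b }.

Definition distant (P Q : point) : Prop :=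
  exists a b c d : R,
    sval P = cyc a b /\ sval Q = cyc c d /\ invertible2 (mx2 a b c d).

Inductive walk : nat -> point -> point -> Prop :=
  | walk0 P : walk 0 P P
  | walkS n P Q M : walk n P Q -> distant Q M -> walk n.+1 P M.

Definition pdist (P Q : point) (n : nat) : Prop :=
  walk n P Q /\ forall m : nat, (m < n)%N -> ~ walk m P Q.

Definition connected : Prop := forall P Q : point, exists n, walk n P Q.

Definition diameter_eq (d : nat) : Prop :=
  (forall P Q : point, exists n, (n <= d)%N /\ pdist P Q n) /\
  (exists P Q : point, pdist P Q d).

End ProjLine.

(** Upper bound.  [GL_2(R)] acts on [P(R)] by right multiplication, transitively
    and preserving distance, so it suffices to join [(1,0)] to the first row of
    every invertible [x y; z w] by a path of three distant pairs
    ([path3_transport], [path3_from_base]).  The path is built from two facts: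
    a purely ring-theoretic lemma, [unit_translate] (if [X x = 1] and
    [(1 - x X) y] is regular, then some [y - x f] is a unit), and the
    dichotomy [injective_dichotomy] (some [x - y c] or some [w + g y] is
    injective).  In [End_K(U)] the regularity hypotheses hold because
    [End_K(U)] is von Neumann regular ([endo_regular]); the dichotomy comes
    from comparability of subspaces ([subspace_comparable], by Zorn's lemma).

    Lower bound.  An infinite independent sequence ([independent_sequence])
    and the shift along it show that [End_K(U)] is not Dedekind-finite:
    [a s = 1 <> s a] ([not_dedekind_finite]).  A walk of length at most 2
    from [R(1,0)] to [R(a,0)] would give [a] a left inverse
    ([no_short_walk]). *)

From HB Require Import structures.
From mathcomp Require Import all_boot all_order all_algebra.
From mathcomp Require classical_sets.
From Stdlib Require Import Classical ClassicalEpsilon.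
Set Implicit Arguments. Unset Strict Implicit. Unset Printing Implicit Defensive.
Import GRing.Theory.
Local Open Scope ring_scope.

Section EndoBasics.
Variables (K : pzRingType) (U : lmodType K).

Lemma mulE (f g : endo U) v : (f * g) v = f (g v). Proof. by []. Qed.
Lemma addE (f g : endo U) v : (f + g) v = f v + g v. Proof. by []. Qed.
Lemma subE (f g : endo U) v : (f - g) v = f v - g v. Proof. by []. Qed.
Lemma oneE v : (1 : endo U) v = v. Proof. by []. Qed.

Lemma endo_eqv (f g : endo U) : f = g -> forall v, f v = g v.
Proof. by move=> ->. Qed.

Lemma endo0v (f : endo U) : f 0 = 0.
Proof. by have := endo_scale f 0 0; rewrite !scale0r. Qed.
Lemma endoN (f : endo U) v : f (- v) = - f v.
Proof. by rewrite -scaleN1r endo_scale scaleN1r. Qed.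
Lemma endoB (f : endo U) u v : f (u - v) = f u - f v.
Proof. by rewrite endo_add endoN. Qed.

Lemma endo_of_relation (rel : U -> U -> Prop) :
  (forall v, exists w, rel v w) ->
  (forall v w w', rel v w -> rel v w' -> w = w') ->
  (forall v w v' w', rel v w -> rel v' w' -> rel (v + v') (w + w')) ->
  (forall (a : K) v w, rel v w -> rel (a *: v) (a *: w)) ->
  exists g : endo U, forall v, rel v (g v).
Proof.
move=> total functional relD relZ.
pose g v := proj1_sig (constructive_indefinite_description _ (total v)).
have gP v : rel v (g v) by rewrite /g; case: constructive_indefinite_description.
have gD x y : g (x + y) = g x + g y by apply: (functional (x + y)); [apply: gP|apply: relD].
have gZ a x : g (a *: x) = a *: g x by apply: (functional (a *: x)); [apply: gP|apply: relZ].
by exists (@Endo K U g gD gZ).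
Qed.

End EndoBasics.

Section Subspaces.
Variables (K : unitRingType) (U : lmodType K).
Hypothesis divK : is_division_ring K.

Lemma mulVf (k : K) : k != 0 -> k^-1 * k = 1.
Proof. by move=> /divK; apply: mulVr. Qed.

Definition subspace (S : U -> Prop) :=
  [/\ S 0, (forall x y, S x -> S y -> S (x + y)) & (forall (a : K) x, S x -> S (a *: x))].

Lemma subspaceD S : subspace S -> forall x y, S x -> S y -> S (x + y).
Proof. by case. Qed.
Lemma subspaceZ S : subspace S -> forall (a : K) x, S x -> S (a *: x).
Proof. by case. Qed.
Lemma subspaceN S : subspace S -> forall x, S x -> S (- x).
Proof. by move=> HS x Sx; rewrite -scaleN1r; apply: subspaceZ. Qed.
Lemma subspaceB S : subspace S -> forall x y, S x -> S y -> S (x - y).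
Proof. by move=> HS x y Sx Sy; apply: subspaceD => //; apply: subspaceN. Qed.

Definition kernel (f : endo U) : U -> Prop := fun v => f v = 0.
Definition image (f : endo U) : U -> Prop := fun v => exists u, v = f u.

Lemma kernel_subspace f : subspace (kernel f).
Proof.
split; first exact: endo0v.
  by move=> a b Ha Hb; rewrite /kernel endo_add Ha Hb addr0.
by move=> a v Hv; rewrite /kernel endo_scale Hv scaler0.
Qed.

Lemma image_subspace f : subspace (image f).
Proof.
split; first by exists 0; rewrite endo0v.
  by move=> x y [u ->] [v ->]; exists (u + v); rewrite endo_add.
by move=> a x [u ->]; exists (a *: u); rewrite endo_scale.
Qed.

(** Every subspace has a complement; this uses Zorn's lemma on the subspaces
    meeting [S] trivially, and is where the division-ring hypothesis enters. *)
Lemma subspace_complement S : subspace S -> exists C : U -> Prop,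
  [/\ subspace C, (forall v, S v -> C v -> v = 0)
    & forall u, exists s c, [/\ S s, C c & u = s + c]].
Proof.
move=> HS.
pose indep_of_S (C : U -> Prop) := [/\ forall x y, C x -> C y -> C (x + y),
  forall (a : K) x, C x -> C (a *: x) & forall v, S v -> C v -> v = 0].
have [A [[AD AZ AS] Amax]] :
    exists A, indep_of_S A /\ forall B, classical_sets.proper A B -> ~ indep_of_S B.
  apply: classical_sets.Zorn_bigcup => F FP Ftot; split.
  - move=> x y [X FX Xx] [Y FY Yy].
    have [XY|YX] := Ftot X Y FX FY.
    + by exists Y => //; case: (FP Y FY) => + _ _; apply => //; apply: XY.
    + by exists X => //; case: (FP X FX) => + _ _; apply => //; apply: YX.
  - by move=> a x [X FX Xx]; exists X => //; case: (FP X FX) => _ + _; apply.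
  - by move=> v Sv [X FX Xx]; case: (FP X FX) => _ _; apply.
pose C c := c = 0 \/ A c.
have HC : subspace C.
  split; first by left.
    by move=> x y [->|Ax] [->|Ay]; rewrite ?addr0 ?add0r; [left|right|right|right; apply: AD].
  by move=> a x [->|Ax]; [left; rewrite scaler0|right; apply: AZ].
exists C; split => //; first by move=> v Sv [//|Av]; apply: AS.
move=> u; apply: NNPP => Hu.
pose B v := exists c (k : K), C c /\ v = c + k *: u.
apply: (Amax B); split.
- by move=> x Ax; exists x, 0; split; [right|rewrite scale0r addr0].
- move=> AB; apply: Hu; exists 0, u; split; [by case: HS| |by rewrite add0r].
  by right; apply: AB; exists 0, 1; split; [left|rewrite scale1r add0r].
- move=> x y [a [k [Ca ->]]] [b [l [Cb ->]]]; exists (a + b), (k + l).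
  by split; [apply: subspaceD|rewrite scalerDl addrACA].
- move=> c x [a [k [Ca ->]]]; exists (c *: a), (c * k).
  by split; [apply: subspaceZ|rewrite scalerDr scalerA].
- move=> v Sv [a [k [Ca Ev]]].
  have [k0|kn0] := eqVneq k 0.
    by move: Ev Ca; rewrite k0 scale0r addr0 => <- [//|]; apply: AS.
  exfalso; apply: Hu; exists (k^-1 *: v), (- (k^-1 *: a)); split.
  + exact: subspaceZ.
  + by apply: subspaceN => //; apply: subspaceZ.
  + by rewrite Ev scalerDr scalerA mulVf // scale1r addrAC subrr add0r.
Qed.

Lemma projection_onto S : subspace S -> exists P : endo U,
  (forall u, S (P u)) /\ (forall s, S s -> P s = s).
Proof.
move=> HS; have [C [HC SC0 SC]] := subspace_complement HS.
have [P HP] : exists P : endo U, forall u, S (P u) /\ C (u - P u).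
  apply: (@endo_of_relation _ _ (fun u s => S s /\ C (u - s))).
  - move=> u; have [s [c [Ss Cc ->]]] := SC u; exists s.
    by rewrite (addrC s) addrK.
  - move=> v w w' [Sw Cw] [Sw' Cw']; apply/eqP; rewrite -subr_eq0; apply/eqP.
    apply: SC0; first exact: subspaceB.
    have -> : w - w' = (v - w') - (v - w) by rewrite opprB (addrC (v - w')) addrA subrK.
    exact: subspaceB.
  - move=> v w v' w' [Sw Cw] [Sw' Cw']; split; first exact: subspaceD.
    by rewrite opprD addrACA; apply: subspaceD.
  - by move=> a v w [Sw Cw]; rewrite -scalerBr; split; apply: subspaceZ.
exists P; split=> [u|s Ss]; first by case: (HP u).
have [SP CP] := HP s; apply/eqP; rewrite eq_sym -subr_eq0; apply/eqP.
by apply: SC0 => //; apply: subspaceB.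
Qed.

(** [End(U)] is von Neumann regular: every [y] has a reflexive quasi-inverse
    [y'], i.e. [y y' y = y] and [y' y y' = y'].  [y'] inverts [y] from the
    image of [y] onto a complement of its kernel. *)
Lemma endo_regular (y : endo U) : exists y' : endo U, y * y' * y = y /\ y' * y * y' = y'.
Proof.
have [Q [QK Qid]] := projection_onto (kernel_subspace y).
have [P [PI Pid]] := projection_onto (image_subspace y).
have preimage_uniq u1 u2 : y u1 = y u2 -> Q u1 = 0 -> Q u2 = 0 -> u1 = u2.
  move=> Ey Q1 Q2; apply/eqP; rewrite -subr_eq0; apply/eqP.
  have <- : Q (u1 - u2) = u1 - u2 by apply: Qid; rewrite /kernel endoB Ey subrr.
  by rewrite endoB Q1 Q2 subrr.
have [y' Hy'] : exists y' : endo U, forall v, y (y' v) = P v /\ Q (y' v) = 0.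
  apply: (@endo_of_relation _ _ (fun v u => y u = P v /\ Q u = 0)).
  - move=> v; have [u Eu] := PI v; exists (u - Q u).
    by rewrite !endoB QK subr0 (Qid _ (QK u)) subrr.
  - by move=> v u1 u2 [E1 Q1] [E2 Q2]; apply: preimage_uniq; rewrite ?E1 ?E2.
  - by move=> v u v' u' [E Q0] [E' Q0']; rewrite !endo_add E E' Q0 Q0' addr0.
  - by move=> a v u [E Q0]; rewrite !endo_scale E Q0 scaler0.
exists y'; split; apply: endo_ext => v; rewrite !mulE.
  by have [-> _] := Hy' (y v); apply: Pid; exists v.
have [E Q0] := Hy' v; have [E' Q0'] := Hy' (y (y' v)).
by apply: preimage_uniq => //; rewrite E' Pid //; exists (y' v).
Qed.

Definition injective_endo (f : endo U) := forall u, f u = 0 -> u = 0.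

Lemma injective_left_inverse (x : endo U) : injective_endo x -> exists X : endo U, X * x = 1.
Proof.
move=> injx; have [x' [xx'x _]] := endo_regular x; exists x'.
apply: endo_ext => u; apply/eqP; rewrite mulE oneE -subr_eq0; apply/eqP; apply: injx.
by rewrite endoB -!mulE xx'x subrr.
Qed.


Definition partial_iso (A B : U -> Prop) (G : U * U -> Prop) :=
  [/\ forall x1 y1 x2 y2, G (x1, y1) -> G (x2, y2) -> G (x1 + x2, y1 + y2),
      forall (k : K) x y, G (x, y) -> G (k *: x, k *: y),
      forall x y, G (x, y) -> A x /\ B y,
      forall y, G (0, y) -> y = 0 &
      forall x, G (x, 0) -> x = 0].

Lemma partial_iso_swap A B G : partial_iso A B G -> partial_iso B A (fun p => G (p.2, p.1)).
Proof.
case=> GD GZ GAB G0 G0'; split => //=.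
- by move=> x1 y1 x2 y2; apply: GD.
- by move=> k x y; apply: GZ.
- by move=> x y /GAB [].
Qed.

Lemma embedding_of_partial_iso A B G : subspace A -> partial_iso A B G ->
  (forall a, A a -> exists b, G (a, b)) ->
  exists j : endo U, (forall a, A a -> B (j a)) /\ (forall a, A a -> j a = 0 -> a = 0).
Proof.
move=> HA [GD GZ GAB G0 G0'] Gtot.
have [P [PA Pid]] := projection_onto HA.
have [j Hj] : exists j : endo U, forall v, G (P v, j v).
  apply: (@endo_of_relation _ _ (fun v w => G (P v, w))).
  - by move=> v; apply: Gtot.
  - move=> v w w' E E'; apply/eqP; rewrite -subr_eq0; apply/eqP; apply: G0.
    by have := GD _ _ _ _ E (GZ (-1) _ _ E'); rewrite !scaleN1r !subrr.
  - by move=> v w v' w' E E'; rewrite endo_add; apply: GD.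
  - by move=> a v w E; rewrite endo_scale; apply: GZ.
exists j; split => a Aa; have := Hj a; rewrite Pid //; first by case/GAB.
by move=> Ga ja0; apply: G0'; rewrite -ja0.
Qed.

Lemma partial_iso_add0 A B G : subspace A -> subspace B ->
  partial_iso A B G -> partial_iso A B (fun p => p = (0, 0) \/ G p).
Proof.
move=> HA HB [GD GZ GAB G0 G0']; split.
- move=> x1 y1 x2 y2 [[-> ->]|G1] [[-> ->]|G2]; rewrite ?addr0 ?add0r;
    [by left|by right|by right|by right; apply: GD].
- by move=> k x y [[-> ->]|Gxy]; [left; rewrite !scaler0|right; apply: GZ].
- by move=> x y [[-> ->]|/GAB //]; split; [case: HA|case: HB].
- by move=> y [[]|/G0].
- by move=> x [[]|/G0'].
Qed.

Lemma partial_iso_extend A B G a b : subspace A -> subspace B ->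
  partial_iso A B G -> G (0, 0) -> A a -> B b ->
  (forall b', ~ G (a, b')) -> (forall a', ~ G (a', b)) ->
  partial_iso A B (fun p => exists g1 g2 (k : K), G (g1, g2) /\ p = (g1 + k *: a, g2 + k *: b)).
Proof.
move=> HA HB [GD GZ GAB G0 G0'] G00 Aa Bb anew bnew; split.
- move=> x1 y1 x2 y2 [g1 [g2 [k [Gg [-> ->]]]]] [h1 [h2 [l [Gh [-> ->]]]]].
  exists (g1 + h1), (g2 + h2), (k + l); split; first exact: GD.
  by rewrite !scalerDl (addrACA g1) (addrACA g2).
- move=> c x y [g1 [g2 [k [Gg [-> ->]]]]]; exists (c *: g1), (c *: g2), (c * k).
  by split; [apply: GZ|rewrite !scalerDr !scalerA].
- move=> x y [g1 [g2 [k [Gg [-> ->]]]]]; have [Ag Bg] := GAB _ _ Gg.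
  by split; apply: subspaceD => //; apply: subspaceZ.
- move=> y [g1 [g2 [k [Gg [E1 ->]]]]].
  have [k0|kn0] := eqVneq k 0.
    by move: E1 Gg; rewrite k0 !scale0r !addr0 => <-; apply: G0.
  exfalso; apply: (anew (- k^-1 *: g2)).
  have -> : a = - k^-1 *: g1.
    have -> : g1 = - (k *: a) by apply/eqP; rewrite -addr_eq0 E1.
    by rewrite scaleNr scalerN opprK scalerA mulVf // scale1r.
  exact: GZ.
- move=> x [g1 [g2 [k [Gg [-> E2]]]]].
  have [k0|kn0] := eqVneq k 0.
    by move: E2 Gg; rewrite k0 !scale0r !addr0 => <-; apply: G0'.
  exfalso; apply: (bnew (- k^-1 *: g1)).
  have -> : b = - k^-1 *: g2.
    have -> : g2 = - (k *: b) by apply/eqP; rewrite -addr_eq0 E2.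
    by rewrite scaleNr scalerN opprK scalerA mulVf // scale1r.
  exact: GZ.
Qed.

(** By Zorn's lemma there is a maximal partial isomorphism between [A] and [B];
    by [partial_iso_extend] it is defined on all of [A] or onto all of [B]. *)
Lemma total_partial_iso A B : subspace A -> subspace B -> exists G, partial_iso A B G /\
  ((forall a, A a -> exists b, G (a, b)) \/ (forall b, B b -> exists a, G (a, b))).
Proof.
move=> HA HB.
have [G [HG Gmax]] : exists G, partial_iso A B G /\
    forall G', classical_sets.proper G G' -> ~ partial_iso A B G'.
  apply: classical_sets.Zorn_bigcup => F FP Ftot; split.
  - move=> x1 y1 x2 y2 [X FX Xx] [Y FY Yy].
    have [XY|YX] := Ftot X Y FX FY.
    + by exists Y => //; case: (FP Y FY) => + _ _ _ _; apply => //; apply: XY.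
    + by exists X => //; case: (FP X FX) => + _ _ _ _; apply => //; apply: YX.
  - by move=> k x y [X FX Xx]; exists X => //; case: (FP X FX) => _ + _ _ _; apply.
  - by move=> x y [X FX Xx]; case: (FP X FX) => _ _ + _ _; apply.
  - by move=> y [X FX Xx]; case: (FP X FX) => _ _ _ + _; apply.
  - by move=> x [X FX Xx]; case: (FP X FX) => _ _ _ _; apply.
have extend_absurd a b : A a -> B b -> (forall b', ~ G (a, b')) ->
    (forall a', ~ G (a', b)) -> G (0, 0) -> False.
  move=> Aa Bb anew bnew G00; apply: (Gmax _ _ (partial_iso_extend HA HB HG G00 Aa Bb anew bnew)).
  split=> [[x y] Gxy|sub]; first by exists x, y, 0; rewrite !scale0r !addr0.
  by apply: (anew b); apply: sub; exists 0, 0, 1; rewrite !scale1r !add0r.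
have G00 : G (0, 0).
  apply: NNPP => G00; apply: (Gmax _ _ (partial_iso_add0 HA HB HG)).
  by split=> [p Gp|sub]; [right|apply: G00; apply: sub; left].
exists G; split => //; apply: NNPP => nontotal.
have [a [Aa anew]] : exists a, A a /\ forall b, ~ G (a, b).
  apply: NNPP => H; apply: nontotal; left => a Aa; apply: NNPP => Ha; apply: H.
  by exists a; split => // b Gab; apply: Ha; exists b.
have [b [Bb bnew]] : exists b, B b /\ forall a, ~ G (a, b).
  apply: NNPP => H; apply: nontotal; right => b Bb; apply: NNPP => Hb; apply: H.
  by exists b; split => // a' Ga'b; apply: Hb; exists a'.
exact: (extend_absurd a b).
Qed.

Lemma subspace_comparable A B : subspace A -> subspace B ->
  (exists j : endo U, (forall a, A a -> B (j a)) /\ (forall a, A a -> j a = 0 -> a = 0)) \/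
  (exists j : endo U, (forall b, B b -> A (j b)) /\ (forall b, B b -> j b = 0 -> b = 0)).
Proof.
move=> HA HB; have [G [HG [totA|totB]]] := total_partial_iso HA HB.
  by left; apply: (embedding_of_partial_iso HA HG).
by right; apply: (embedding_of_partial_iso HB (partial_iso_swap HG)).
Qed.

End Subspaces.

Section Matrices2.
Variable R : pzRingType.

Definition inverse_pair (u g : R) := u * g = 1 /\ g * u = 1.

Lemma mx2E (M : 'M[R]_2) : M = mx2 (M 0 0) (M 0 1) (M 1 0) (M 1 1).
Proof.
apply/matrixP => i j; rewrite mxE.
by case: i => [[|[|//]] Hi]; case: j => [[|[|//]] Hj] /=; congr (M _ _); apply: val_inj.
Qed.

Lemma mx2_mul (a b c d a' b' c' d' : R) :
  mx2 a b c d *m mx2 a' b' c' d' =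
  mx2 (a * a' + b * c') (a * b' + b * d') (c * a' + d * c') (c * b' + d * d').
Proof.
apply/matrixP => i j; rewrite !mxE !big_ord_recr big_ord0 !mxE /=.
by case: i => [[|[|//]] Hi]; case: j => [[|[|//]] Hj]; rewrite /= add0r.
Qed.

Lemma mx2_one : (1%:M : 'M[R]_2) = mx2 1 0 0 1.
Proof.
apply/matrixP => i j; rewrite !mxE.
by case: i => [[|[|//]] Hi]; case: j => [[|[|//]] Hj].
Qed.

End Matrices2.

Ltac mx2_ring := rewrite ?mx2_mul; congr mx2;
  rewrite ?(mul1r, mulr1, mul0r, mulr0, add0r, addr0, mulrN, mulNr, addrN, addNr,
            opprK, oppr0, subr0).

Section Invertible2.
Variable R : pzRingType.

Lemma mx2_inj (a b c d a' b' c' d' : R) :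
  mx2 a b c d = mx2 a' b' c' d' -> [/\ a = a', b = b', c = c' & d = d'].
Proof.
move=> E; have E' i j := congr1 (fun M : 'M[R]_2 => M i j) E.
by move: (E' 0 0) (E' 0 1) (E' 1 0) (E' 1 1); rewrite !mxE /=.
Qed.

Lemma invertible2M (A B : 'M[R]_2) : invertible2 A -> invertible2 B -> invertible2 (A *m B).
Proof.
move=> [A' [AA' A'A]] [B' [BB' B'B]]; exists (B' *m A'); split.
  by rewrite mulmxA -(mulmxA A) BB' mulmx1 AA'.
by rewrite mulmxA -(mulmxA B') A'A mulmx1 B'B.
Qed.

Definition mx2_inverse (x y z w p q r t : R) :=
  [/\ x * p + y * r = 1, x * q + y * t = 0, z * p + w * r = 0 & z * q + w * t = 1] /\
  [/\ p * x + q * z = 1, p * y + q * w = 0, r * x + t * z = 0 & r * y + t * w = 1].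

Lemma invertible2_inverse (x y z w : R) : invertible2 (mx2 x y z w) ->
  exists p q r t, mx2_inverse x y z w p q r t.
Proof.
move=> [N [H1 H2]]; exists (N 0 0), (N 0 1), (N 1 0), (N 1 1).
move: H1 H2; rewrite {1 2}(mx2E N) !mx2_mul mx2_one.
by move=> /mx2_inj [? ? ? ?] /mx2_inj [? ? ? ?].
Qed.

Lemma invertible2_by (x y z w p q r t : R) :
  mx2 x y z w *m mx2 p q r t = mx2 1 0 0 1 -> mx2 p q r t *m mx2 x y z w = mx2 1 0 0 1 ->
  invertible2 (mx2 x y z w).
Proof. by rewrite -mx2_one; exists (mx2 p q r t). Qed.

Lemma invertible2_lower (c : R) : invertible2 (mx2 1 0 c 1).
Proof. by apply: (@invertible2_by _ _ _ _ 1 0 (- c) 1); mx2_ring. Qed.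

Lemma invertible2_upper (c : R) : invertible2 (mx2 1 c 0 1).
Proof. by apply: (@invertible2_by _ _ _ _ 1 (- c) 0 1); mx2_ring. Qed.

Lemma invertible2_swap : invertible2 (mx2 (0 : R) 1 1 0).
Proof. by apply: (@invertible2_by _ _ _ _ 0 1 1 0); mx2_ring. Qed.

Lemma invertible2_antidiag (u f g : R) : inverse_pair u g -> invertible2 (mx2 0 1 u f).
Proof.
move=> [ug gu]; apply: (@invertible2_by _ _ _ _ (- (g * f)) g 1 0); mx2_ring => //.
by rewrite mulrA ug mul1r addNr.
Qed.

Lemma invertible2_lower_unit (x u g : R) : inverse_pair u g -> invertible2 (mx2 1 0 x u).
Proof.
move=> [ug gu]; apply: (@invertible2_by _ _ _ _ 1 0 (- (g * x)) g); mx2_ring => //.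
by rewrite mulrA ug mul1r addrN.
Qed.

Definition path3 (x1 y1 x2 y2 : R) := exists a b c d,
  [/\ invertible2 (mx2 x1 y1 a b), invertible2 (mx2 a b c d) & invertible2 (mx2 c d x2 y2)].

(** Right multiplication by an invertible matrix preserves distance, and
    [GL_2(R)] moves [(1,0)] to any admissible pair; hence paths of length 3
    from [(1,0)] to every admissible pair yield such paths between any two. *)
Lemma path3_transport :
  (forall x y z w, invertible2 (mx2 x y z w) -> path3 1 0 x y) ->
  forall x1 y1 x2 y2, admissible x1 y1 -> admissible x2 y2 -> path3 x1 y1 x2 y2.
Proof.
move=> from_base x1 y1 x2 y2 [z1 [w1 [N1 [M1N1 N1M1]]]] [z2 [w2 M2inv]].
pose M1 := mx2 x1 y1 z1 w1.
have M1inv : invertible2 M1 by exists N1.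
have N1inv : invertible2 N1 by exists M1.
have Ainv : invertible2 (mx2 x2 y2 z2 w2 *m N1) := invertible2M M2inv N1inv.
have AM1 : (mx2 x2 y2 z2 w2 *m N1) *m M1 = mx2 x2 y2 z2 w2 by rewrite -mulmxA N1M1 mulmx1.
move: Ainv AM1; set A := _ *m N1; rewrite (mx2E A) mx2_mul => Ainv /mx2_inj [Ex2 Ey2 _ _].
have [a [b [c [d [H1 H2 H3]]]]] := from_base _ _ _ _ Ainv.
exists (a * x1 + b * z1), (a * y1 + b * w1), (c * x1 + d * z1), (c * y1 + d * w1); split.
- have -> : mx2 x1 y1 (a * x1 + b * z1) (a * y1 + b * w1) = mx2 1 0 a b *m M1 by mx2_ring.
  exact: invertible2M H1 M1inv.
- by rewrite -mx2_mul; apply: invertible2M H2 M1inv.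
- by rewrite -Ex2 -Ey2 -mx2_mul; apply: invertible2M H3 M1inv.
Qed.

End Invertible2.

(** Let [x y; z w] be invertible with inverse
    [p q; r t] and let [X x = 1]; put [e := 1 - x X], the idempotent killing
    the "image" of [x].  With [Pi := 1 - k e y] (the idempotent with [e y Pi = 0]) and
    [phi := w - z X y], the element [h := e y + x phi Pi = y - x (X y - phi Pi)]
    has right inverse [g := (1 - Pi) r + t X] and is left regular. *)
Section UnitTranslate.
Variables (R : pzRingType) (x y z w p q r t X k : R).
Hypotheses (xp_yr : x * p + y * r = 1) (xq_yt : x * q + y * t = 0).
Hypotheses (zq_wt : z * q + w * t = 1) (rx_tz : r * x + t * z = 0).
Hypothesis ry_tw : r * y + t * w = 1.
Hypothesis Xx : X * x = 1.
Let e := 1 - x * X.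
Hypothesis eyk : e * y * k * (e * y) = e * y.
Let Pi := 1 - k * (e * y).
Let phi := w - z * X * y.
Let h := e * y + x * phi * Pi.
Let g := (1 - Pi) * r + t * X.

Let ex : e * x = 0. Proof. by rewrite /e mulrBl mul1r -mulrA Xx mulr1 subrr. Qed.
Let Xe : X * e = 0. Proof. by rewrite /e mulrBr mulr1 mulrA Xx mul1r subrr. Qed.
Let eyPi : e * y * Pi = 0. Proof. by rewrite /Pi mulrBr mulr1 mulrA eyk subrr. Qed.
Let yt : y * t = - (x * q). Proof. by apply/eqP; rewrite -addr_eq0 addrC xq_yt. Qed.
Let eyt : e * y * t = 0. Proof. by rewrite -mulrA yt mulrN mulrA ex mul0r oppr0. Qed.

Lemma translate_right_inverse : h * g = 1.
Proof.
have PiPi : Pi * Pi = Pi by rewrite {1}/Pi mulrBl mul1r -mulrA eyPi mulr0 subr0.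
have Pit : Pi * t = t by rewrite /Pi mulrBl mul1r -mulrA eyt mulr0 subr0.
have phit : phi * t = 1.
  by rewrite /phi mulrBl -!mulrA yt !mulrN (mulrA X) Xx mul1r opprK addrC zq_wt.
have Pig : Pi * g = t * X.
  by rewrite /g mulrDr !mulrA mulrBr mulr1 PiPi subrr mul0r add0r Pit.
have eyg : e * y * g = e.
  rewrite /g mulrDr !mulrA mulrBr mulr1 eyPi subr0 eyt mul0r addr0.
  have yr : y * r = 1 - x * p by apply/eqP; rewrite eq_sym subr_eq addrC xp_yr.
  by rewrite -mulrA yr mulrBr mulr1 mulrA ex mul0r subr0.
by rewrite /h mulrDl eyg -!mulrA Pig !mulrA -(mulrA x) phit mulr1 /e subrK.
Qed.

Lemma translate_left_regular a : h * a = 0 -> a = 0.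
Proof.
move=> ha.
have phiPia : phi * Pi * a = 0.
  have : X * (h * a) = 0 by rewrite ha mulr0.
  by rewrite /h mulrDl mulrDr !mulrA Xe Xx !mul0r mul1r add0r.
have eya : e * y * a = 0 by move: ha; rewrite /h mulrDl -!(mulrA x) -mulrA phiPia mulr0 addr0.
have Pia : Pi * a = a by rewrite /Pi mulrBl mul1r -mulrA eya mulr0 subr0.
have wa : w * a = z * (X * y * a).
  by apply/eqP; rewrite -subr_eq0 !mulrA -mulrBl -/phi -Pia mulrA phiPia.
have ya : y * a = x * (X * y * a).
  by apply/eqP; rewrite -subr_eq0 !mulrA -mulrBl -[y in y - _]mul1r -mulrBl -/e eya.
by rewrite -[a]mul1r -ry_tw mulrDl -!mulrA ya wa (mulrA r) (mulrA t) -mulrDl rx_tz mul0r.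
Qed.

Lemma unit_translate : exists f g, inverse_pair (y - x * f) g.
Proof.
exists (X * y - phi * Pi), g.
have -> : y - x * (X * y - phi * Pi) = h.
  by rewrite /h /e mulrBr opprB [(1 - _) * y]mulrBl mul1r !mulrA addrA addrAC.
split; first exact: translate_right_inverse.
apply/eqP; rewrite -subr_eq0; apply/eqP; apply: translate_left_regular.
by rewrite mulrBr mulr1 mulrA translate_right_inverse mul1r subrr.
Qed.

End UnitTranslate.

Section Dichotomy.
Variables (K : unitRingType) (U : lmodType K).

(** We fix [y] together with a reflexive quasi-inverse [yi]; [y yi] projects
    onto the image of [y] and [yi y] onto a complement [compl_ker] of its kernel. *)
Variables (x y z w yi : endo U).
Hypothesis yyiy : y * yi * y = y.
Hypothesis yiyyi : yi * y * yi = yi.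

(** [compl_ker := ker (1 - yi y)] is a complement of [ker y], and
    [to_image := ker ((1 - y yi) x)] is the space of vectors that [x] maps into
    the image of [y]. *)
Definition compl_ker := kernel (1 - yi * y).
Definition to_image := kernel ((1 - y * yi) * x).

Lemma compl_kerP v : compl_ker v <-> yi (y v) = v.
Proof.
rewrite /compl_ker /kernel subE oneE mulE; split => [/eqP|->]; last by rewrite subrr.
by rewrite subr_eq0 => /eqP.
Qed.

Lemma to_imageP u : to_image u <-> x u = y (yi (x u)).
Proof.
rewrite /to_image /kernel mulE subE oneE mulE; split => [/eqP|<-]; last by rewrite subrr.
by rewrite subr_eq0 => /eqP.
Qed.

Lemma to_image_intro u v : x u = y v -> to_image u.
Proof. by move=> xu; apply/to_imageP; rewrite xu -!mulE yyiy. Qed.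

Lemma compl_ker_yi v : compl_ker (yi v).
Proof. by apply/compl_kerP; rewrite -!mulE yiyyi. Qed.

Lemma compl_ker_trivial v : compl_ker v -> y v = 0 -> v = 0.
Proof. by move=> /compl_kerP Cv yv; rewrite -Cv yv endo0v. Qed.

Lemma injective_left_translate (iota pE : endo U) :
  (forall a, to_image a -> compl_ker (iota a)) -> (forall a, to_image a -> iota a = 0 -> a = 0) ->
  (forall u, to_image (pE u)) -> (forall a, to_image a -> pE a = a) ->
  injective_endo (x - y * ((yi * x - iota) * pE)).
Proof.
move=> iotaC iota_inj pEE pEid u.
have xpE : x (pE u) = y (yi (x (pE u))) by apply/to_imageP.
rewrite subE !mulE subE mulE endoB opprB -xpE => H.
have Eu : to_image u.
  have Ed : to_image (u - pE u).
    apply: (@to_image_intro _ (- iota (pE u))); rewrite endoB endoN.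
    by apply/eqP; rewrite -addr_eq0 -addrA (addrC (- _)) H.
  have u_pE : u - pE u = 0 by rewrite -(pEid _ Ed) endoB (pEid _ (pEE u)) subrr.
  by rewrite -(subrK (pE u) u) u_pE add0r.
move: H; rewrite pEid // addrC subrK => yiota.
by apply: iota_inj => //; apply: compl_ker_trivial => //; apply: iotaC.
Qed.

Variables (p q r t : endo U).
Hypotheses (px_qz : p * x + q * z = 1) (py_qw : p * y + q * w = 0) (ry_tw : r * y + t * w = 1).

Lemma injective_right_translate (nu : endo U) :
  (forall c, compl_ker c -> to_image (nu c)) -> (forall c, compl_ker c -> nu c = 0 -> c = 0) ->
  injective_endo (w + ((z - w * yi * x) * nu - w) * yi * y).
Proof.
move=> nuE nu_inj v.
have pxqz u : p (x u) + q (z u) = u by apply: (endo_eqv px_qz).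
have pyqw u : p (y u) + q (w u) = 0 by apply: (endo_eqv py_qw).
have rytw u : r (y u) + t (w u) = u by apply: (endo_eqv ry_tw).
set c := yi (y v); set k := v - c.
have Cc : compl_ker c := compl_ker_yi _.
have yk : y k = 0 by rewrite /k endoB -!mulE yyiy subrr.
have Ee : to_image (nu c) := nuE _ Cc; set e := nu c in Ee *.
rewrite addE !mulE subE !mulE subE mulE -/c -/e -[in w v](subrK c v) -/k endo_add.
rewrite mulE -addrA subrKC => Hv.
have ze : z e = w (yi (x e)) - w k.
  by apply/eqP; rewrite -subr_eq0 opprB addrCA Hv.
have qwk : q (w k) = 0 by have := pyqw k; rewrite yk endo0v add0r.
have e0 : e = 0.
  by rewrite -(pxqz e) ze {1}(proj1 (to_imageP _) Ee) endoB addrA pyqw qwk subr0.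
move: Hv; rewrite e0 !endo0v subrr addr0 => wk.
have k0 : k = 0 by rewrite -(rytw k) yk wk !endo0v addr0.
have c0 : c = 0 by apply: nu_inj.
by rewrite -(subrK c v) -/k k0 c0 addr0.
Qed.

End Dichotomy.

Section UpperBound.
Variables (K : unitRingType) (U : lmodType K).
Hypothesis divK : is_division_ring K.
Local Notation R := (endo U).

(** For an invertible [x y; z w], some [x - y c] or some [w + g y] is
    injective: compare [to_image], the preimage of [im y] under [x], with the
    complement [compl_ker] of [ker y]. *)
Lemma injective_dichotomy (x y z w : R) : invertible2 (mx2 x y z w) ->
  (exists c, injective_endo (x - y * c)) \/ (exists g, injective_endo (w + g * y)).
Proof.
move=> /invertible2_inverse [p [q [r [t [_ [px_qz py_qw _ ry_tw]]]]]].
have [yi [yyiy yiyyi]] := endo_regular divK y.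
have E_sub : subspace (to_image x y yi) := kernel_subspace _.
have [pE [pEE pEid]] := projection_onto divK E_sub.
have [[iota [iotaC iota_inj]]|[nu [nuE nu_inj]]] :=
  subspace_comparable divK E_sub (kernel_subspace (1 - yi * y)).
  by left; exists ((yi * x - iota) * pE); apply: injective_left_translate.
right; exists (((z - w * yi * x) * nu - w) * yi).
exact: (injective_right_translate yyiy yiyyi px_qz py_qw ry_tw).
Qed.

Lemma unit_translate_endo (x y z w : R) : invertible2 (mx2 x y z w) -> injective_endo x ->
  exists f g, inverse_pair (y - x * f) g.
Proof.
move=> /invertible2_inverse [p [q [r [t [[xp_yr xq_yt _ zq_wt] [_ _ rx_tz ry_tw]]]]]].
move=> /(injective_left_inverse divK) [X Xx].
have [k [eyk _]] := endo_regular divK ((1 - x * X) * y).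
exact: (unit_translate xp_yr xq_yt zq_wt rx_tz ry_tw Xx eyk).
Qed.

(** Every admissible pair of [End(U)] is at distance at most 3 from [(1,0)],
    through a path of the shape [(1,0) ~ (c,1) ~ (u,v) ~ (x,y)]. *)
Lemma path3_from_base (x y z w : R) : invertible2 (mx2 x y z w) -> path3 1 0 x y.
Proof.
move=> Ainv; case: (injective_dichotomy Ainv) => [[c xyc_inj]|[g wgy_inj]].
- pose x' := x - y * c.
  have A'inv : invertible2 (mx2 x' y (z - w * c) w).
    have -> : mx2 x' y (z - w * c) w = mx2 x y z w *m mx2 1 0 (- c) 1 by mx2_ring.
    by apply: invertible2M => //; apply: invertible2_lower.
  have [f [g unit_g]] := unit_translate_endo A'inv xyc_inj.
  exists c, 1, (1 + f * c), f; split; first exact: invertible2_lower.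
    have -> : mx2 c 1 (1 + f * c) f = mx2 0 1 1 f *m mx2 1 0 c 1 by mx2_ring.
    apply: invertible2M; last exact: invertible2_lower.
    by apply: (@invertible2_antidiag _ 1 f 1); split; rewrite mulr1.
  have -> : mx2 (1 + f * c) f x y =
      (mx2 1 0 x' (y - x' * f) *m mx2 1 f 0 1) *m mx2 1 0 c 1.
    by mx2_ring; rewrite ?subrKC // /x' subrK.
  apply: invertible2M; last exact: invertible2_lower.
  apply: invertible2M; last exact: invertible2_upper.
  exact: invertible2_lower_unit unit_g.
- pose e := z + g * x; pose f := w + g * y.
  have Binv : invertible2 (mx2 e f x y).
    have -> : mx2 e f x y = mx2 1 g 0 1 *m (mx2 0 1 1 0 *m mx2 x y z w) by mx2_ring.
    apply: invertible2M; first exact: invertible2_upper.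
    by apply: invertible2M => //; apply: invertible2_swap.
  have B'inv : invertible2 (mx2 f e y x).
    have -> : mx2 f e y x = mx2 e f x y *m mx2 0 1 1 0 by mx2_ring.
    by apply: invertible2M => //; apply: invertible2_swap.
  have [c [g' unit_g']] := unit_translate_endo B'inv wgy_inj.
  exists c, 1, e, f; split => //; first exact: invertible2_lower.
  have -> : mx2 c 1 e f = mx2 0 1 (e - f * c) f *m mx2 1 0 c 1 by mx2_ring; rewrite ?subrK.
  apply: invertible2M; last exact: invertible2_lower.
  exact: invertible2_antidiag unit_g'.
Qed.

End UpperBound.

Section LinearDependence.
Variable K : unitRingType.
Hypothesis divK : is_division_ring K.

(** A homogeneous linear system with more unknowns than equations has a
    nontrivial solution: any [n+1] vectors of [K^n] are dependent.  Proof by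
    Gaussian elimination of the last coordinate. *)
Lemma wide_system_solution n (C : 'I_n.+1 -> 'I_n -> K) :
  exists a : 'I_n.+1 -> K, (exists i, a i != 0) /\ forall j, \sum_i a i * C i j = 0.
Proof.
elim: n C => [|n IH] C.
  by exists (fun _ => 1); split; [exists ord0; rewrite oner_neq0|case].
pose l : 'I_n.+1 := ord_max.
have [k pivot] : exists k : 'I_n.+2, C k l != 0 \/ forall i, C i l = 0.
  have [[k Ck]|none] := classic (exists k, C k l != 0); first by exists k; left.
  exists ord0; right => i; apply/eqP; apply: NNPP => Ci; apply: none; exists i; exact/negP.
pose c := C k l.
pose D (i : 'I_n.+1) (j : 'I_n) :=
  C (lift k i) (lift l j) - C (lift k i) l * c^-1 * C k (lift l j).
have [a' [[i0 a'i0] a'D]] := IH D.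
pose beta := - (\sum_i a' i * C (lift k i) l) * c^-1.
pose a (i : 'I_n.+2) := if unlift k i is Some i' then a' i' else beta.
have ak : a k = beta by rewrite /a unlift_none.
have alift i : a (lift k i) = a' i by rewrite /a liftK.
exists a; split; first by exists (lift k i0); rewrite alift.
move=> j; rewrite (bigD1_ord k) //= ak.
under eq_bigr => i _ do rewrite alift.
case: (unliftP l j) => [j' ->|->].
- have CD i : C (lift k i) (lift l j') = D i j' + C (lift k i) l * c^-1 * C k (lift l j').
    by rewrite /D subrK.
  under eq_bigr => i _ do rewrite CD mulrDr.
  rewrite big_split /= a'D add0r.
  have -> : \sum_i a' i * (C (lift k i) l * c^-1 * C k (lift l j')) =
            (\sum_i a' i * C (lift k i) l) * c^-1 * C k (lift l j').
    by rewrite !mulr_suml; apply: eq_bigr => i _; rewrite !mulrA.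
  by rewrite /beta !mulNr addNr.
- case: pivot => [ck|col0].
    by rewrite /beta !mulNr -mulrA mulVf // mulr1 addNr.
  by rewrite col0 mulr0 add0r big1 // => i _; rewrite col0 mulr0.
Qed.

End LinearDependence.

Section IndependentSequence.
Variables (K : unitRingType) (U : lmodType K).
Hypothesis divK : is_division_ring K.
Hypothesis infU : infinite_dim U.

Definition in_span_of (l : seq U) x :=
  exists c : nat -> K, x = \sum_(i < size l) c i *: nth 0 l i.

(** No finite list spans [U]: otherwise [size l + 1] independent vectors would
    be combinations of [size l] vectors, against [wide_system_solution]. *)
Lemma finite_list_not_spanning l : exists x, ~ in_span_of l x.
Proof.
apply: NNPP => spanning.
have span x : in_span_of l x by apply: NNPP => nx; apply: spanning; exists x.
pose n := size l.
have [v v_indep] := infU n.+1.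
pose cf i := proj1_sig (constructive_indefinite_description _ (span (v i))).
have cfP i : v i = \sum_(j < n) cf i j *: nth 0 l j.
  by rewrite /cf; case: constructive_indefinite_description.
have [a [[i0 ai0] aC]] := wide_system_solution divK (fun (i : 'I_n.+1) (j : 'I_n) => cf i j).
suff : \sum_i a i *: v i = 0 by move/v_indep/(_ i0)/eqP; rewrite (negbTE ai0).
under eq_bigr => i _ do rewrite cfP scaler_sumr.
rewrite exchange_big /=; apply: big1 => j _.
under eq_bigr => i _ do rewrite scalerA.
by rewrite -scaler_suml aC scale0r.
Qed.

Definition next_vector (l : seq U) : U :=
  proj1_sig (constructive_indefinite_description _ (finite_list_not_spanning l)).

Fixpoint first_vectors (n : nat) : seq U :=
  if n is n'.+1 then rcons (first_vectors n') (next_vector (first_vectors n')) else [::].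

Lemma next_vector_new l : ~ in_span_of l (next_vector l).
Proof. by rewrite /next_vector; case: constructive_indefinite_description. Qed.

Lemma size_first_vectors n : size (first_vectors n) = n.
Proof. by elim: n => //= n IH; rewrite size_rcons IH. Qed.

Lemma nth_first_vectors n i : (i < n)%N ->
  nth 0 (first_vectors n) i = next_vector (first_vectors i).
Proof.
elim: n => // n IH; rewrite ltnS leq_eqVlt => /orP[/eqP ->|lt_in] /=.
  by rewrite nth_rcons size_first_vectors ltnn eqxx.
by rewrite nth_rcons size_first_vectors lt_in IH.
Qed.

Lemma independent_sequence : exists v : nat -> U,
  forall n (c : nat -> K), \sum_(i < n) c i *: v i = 0 -> forall i, (i < n)%N -> c i = 0.
Proof.
exists (fun i => next_vector (first_vectors i)) => n; elim: n => // n IH c.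
rewrite big_ord_recr /=; have [cn0|cn] := eqVneq (c n) 0.
  rewrite cn0 scale0r addr0 => /IH c0 i; rewrite ltnS leq_eqVlt.
  by case/orP=> [/eqP ->|/c0].
move=> rel; exfalso; apply: (next_vector_new (l := first_vectors n)).
exists (fun i => - (c n)^-1 * c i); rewrite size_first_vectors.
have -> : \sum_(i < n) - (c n)^-1 * c i *: nth 0 (first_vectors n) i =
          - (c n)^-1 *: \sum_(i < n) c i *: next_vector (first_vectors i).
  by rewrite scaler_sumr; apply: eq_bigr => i _; rewrite nth_first_vectors // scalerA.
have -> : \sum_(i < n) c i *: next_vector (first_vectors i) =
          - (c n *: next_vector (first_vectors n)).
  by apply/eqP; rewrite -addr_eq0 rel.
by rewrite scalerN scaleNr opprK scalerA mulVf // scale1r.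
Qed.

End IndependentSequence.

Section Shift.
Variables (K : unitRingType) (U : lmodType K).
Hypothesis divK : is_division_ring K.
Variable v : nat -> U.
Hypothesis v_indep :
  forall n (c : nat -> K), \sum_(i < n) c i *: v i = 0 -> forall i, (i < n)%N -> c i = 0.

Definition pad n (c : nat -> K) i := if (i < n)%N then c i else 0.

Lemma sum_pad (f : nat -> U) n N c : (n <= N)%N ->
  \sum_(i < N) pad n c i *: f i = \sum_(i < n) c i *: f i.
Proof.
move=> le_nN; rewrite (big_ord_widen N (fun i => c i *: f i) le_nN) [RHS]big_mkcond.
by apply: eq_bigr => i _; rewrite /pad; case: ifP => _; rewrite ?scale0r.
Qed.

Lemma coordinates_unique n m (c d : nat -> K) :
  \sum_(i < n) c i *: v i = \sum_(i < m) d i *: v i -> pad n c =1 pad m d.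
Proof.
move=> E i; have [lt_i|ge_i] := ltnP i (n + m).
  apply/eqP; rewrite -subr_eq0; apply/eqP.
  apply: (v_indep (n := n + m) (c := fun i => pad n c i - pad m d i)) => //.
  under eq_bigr => j _ do rewrite scalerBl.
  by rewrite sumrB !sum_pad ?leq_addr ?leq_addl // E subrr.
by rewrite /pad !ltnNge (leq_trans (leq_addr m n) ge_i) (leq_trans (leq_addl n m) ge_i).
Qed.

Definition in_span x := exists n (c : nat -> K), x = \sum_(i < n) c i *: v i.
Definition shift_rel x y := exists n (c : nat -> K),
  x = \sum_(i < n) c i *: v i /\ y = \sum_(i < n) c i *: v i.+1.

Lemma shift_rel_uniq x y y' : shift_rel x y -> shift_rel x y' -> y = y'.
Proof.
move=> [n [c [Ex ->]]] [m [d [Ex' ->]]].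
have cd := coordinates_unique (etrans (esym Ex) Ex').
rewrite -(sum_pad (fun i => v i.+1) c (leq_addr m n)).
rewrite -(sum_pad (fun i => v i.+1) d (leq_addl n m)).
by apply: eq_bigr => i _; rewrite cd.
Qed.

Lemma shift_relD x y x' y' : shift_rel x y -> shift_rel x' y' -> shift_rel (x + x') (y + y').
Proof.
move=> [n [c [-> ->]]] [m [d [-> ->]]]; exists (n + m)%N, (fun i => pad n c i + pad m d i).
rewrite -(sum_pad v c (leq_addr m n)) -(sum_pad v d (leq_addl n m)).
rewrite -(sum_pad (fun i => v i.+1) c (leq_addr m n)).
rewrite -(sum_pad (fun i => v i.+1) d (leq_addl n m)).
by rewrite -!big_split; split; apply: eq_bigr => i _; rewrite scalerDl.
Qed.

Lemma shift_relZ (a : K) x y : shift_rel x y -> shift_rel (a *: x) (a *: y).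
Proof.
move=> [n [c [-> ->]]]; exists n, (fun i => a * c i); rewrite !scaler_sumr.
by split; apply: eq_bigr => i _; rewrite scalerA.
Qed.

Lemma in_span_shift x : in_span x <-> exists y, shift_rel x y.
Proof.
split=> [[n [c ->]]|[y [n [c [-> _]]]]]; last by exists n, c.
by exists (\sum_(i < n) c i *: v i.+1), n, c.
Qed.

Lemma span_subspace : subspace in_span.
Proof.
split; first by exists 0%N, (fun _ => 0); rewrite big_ord0.
  move=> x y /in_span_shift [x' Hx] /in_span_shift [y' Hy]; apply/in_span_shift.
  by exists (x' + y'); apply: shift_relD.
by move=> a x /in_span_shift [x' Hx]; apply/in_span_shift; exists (a *: x'); apply: shift_relZ.
Qed.

Definition cons_coef (a : K) (c : nat -> K) i := if i is i'.+1 then c i' else a.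

Lemma sum_cons_coef n a c :
  \sum_(i < n.+1) cons_coef a c i *: v i = a *: v 0 + \sum_(i < n) c i *: v i.+1.
Proof. by rewrite big_ord_recl. Qed.

Lemma shift_endo : exists P sigma : endo U,
  [/\ forall u, in_span (P u), forall s, in_span s -> P s = s,
      forall u, in_span (sigma u), forall s, in_span s -> sigma s = 0 -> s = 0
    & forall u, sigma u <> v 0].
Proof.
have [P [PS Pid]] := projection_onto divK span_subspace.
have [sigma Hsigma] : exists sigma : endo U, forall u, shift_rel (P u) (sigma u).
  apply: (@endo_of_relation _ _ (fun u y => shift_rel (P u) y)).
  - by move=> u; apply/in_span_shift.
  - by move=> u y y'; apply: shift_rel_uniq.
  - by move=> u y u' y' H1 H2; rewrite endo_add; apply: shift_relD.
  - by move=> a u y H; rewrite endo_scale; apply: shift_relZ.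
exists P, sigma; split => //.
- move=> u; have [n [c [_ ->]]] := Hsigma u; exists n.+1, (cons_coef 0 c).
  by rewrite sum_cons_coef scale0r add0r.
- move=> s Ss; have [n [c [Es ->]]] := Hsigma s; rewrite (Pid _ Ss) in Es.
  move=> shift0; rewrite Es; apply: big1 => i _.
  have := v_indep (c := cons_coef 0 c) (n := n.+1) _ (i := i.+1).
  rewrite sum_cons_coef scale0r add0r shift0 ltnS ltn_ord => /(_ erefl isT) /= ->.
  by rewrite scale0r.
- move=> u sigma_v0; have [n [c [_ Esigma]]] := Hsigma u.
  have := v_indep (c := cons_coef (-1) c) (n := n.+1) _ (i := 0) (ltn0Sn _).
  rewrite sum_cons_coef -Esigma sigma_v0 scaleN1r addNr => /(_ erefl) /= /eqP.
  by rewrite oppr_eq0 oner_eq0.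
Qed.

End Shift.

Section DedekindInfinite.
Variables (K : unitRingType) (U : lmodType K).
Hypothesis divK : is_division_ring K.
Hypothesis infU : infinite_dim U.

(** [End(U)] is not Dedekind-finite: the extended shift [s := sigma + (1 - P)]
    is injective, hence has a left inverse [a], but [s] misses [v 0]. *)
Lemma not_dedekind_finite : exists a s : endo U, a * s = 1 /\ s * a <> 1.
Proof.
have [v v_indep] := independent_sequence divK infU.
have [P [sigma [PS Pid sigmaS sigma_inj sigma_v0]]] := shift_endo divK v_indep.
pose s : endo U := sigma + (1 - P).
have in_span_s u : in_span v (s u) -> u = P u /\ s u = sigma u.
  move=> Ssu; have Su : in_span v (u - P u).
    have -> : u - P u = s u - sigma u by rewrite /s addE subE oneE (addrC (sigma u)) addrK.
    by apply: subspaceB => //; apply: span_subspace.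
  have uP : u - P u = 0 by rewrite -(Pid _ Su) endoB (Pid _ (PS u)) subrr.
  by split; [apply/eqP; rewrite -subr_eq0 uP|rewrite /s addE subE oneE uP addr0].
have s_inj : injective_endo s.
  move=> u su0; have [uP sE] : u = P u /\ s u = sigma u.
    by apply: in_span_s; rewrite su0; case: (span_subspace v).
  by apply: sigma_inj; [rewrite uP|rewrite -sE].
have s_v0 u : s u <> v 0.
  move=> suv0; have [_ sE] : u = P u /\ s u = sigma u.
    by apply: in_span_s; rewrite suv0; exists 1%N, (fun _ => 1); rewrite big_ord1 scale1r.
  by apply: (sigma_v0 u); rewrite -sE.
have [a a_s] := injective_left_inverse divK s_inj.
exists a, s; split => // s_a; apply: (s_v0 (a (v 0))).
by rewrite -mulE s_a oneE.
Qed.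

End DedekindInfinite.

Section ProjectiveLine.
Variable R : pzRingType.

Definition point_of (a b : R) (adm : admissible a b) : point R :=
  exist _ (cyc a b) (ex_intro _ a (ex_intro _ b (conj adm erefl))).

Lemma admissible_second_row (a b c d : R) : invertible2 (mx2 a b c d) -> admissible c d.
Proof.
move=> inv; exists a, b.
have -> : mx2 c d a b = mx2 0 1 1 0 *m mx2 a b c d by mx2_ring.
exact: invertible2M (@invertible2_swap R) inv.
Qed.

Lemma walk0_eq (P Q : point R) : walk 0 P Q -> P = Q.
Proof. by move=> W; inversion W. Qed.

Lemma walkS_last n (P Q : point R) : walk n.+1 P Q -> exists M, walk n P M /\ distant M Q.
Proof. by move=> W; inversion W; exists Q0. Qed.

Lemma walk3_of_path3 :
  (forall x1 y1 x2 y2 : R, admissible x1 y1 -> admissible x2 y2 -> path3 x1 y1 x2 y2) ->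
  forall P Q : point R, walk 3 P Q.
Proof.
move=> paths [S [x1 [y1 [adm1 ES]]]] [T [x2 [y2 [adm2 ET]]]].
have [a [b [c [d [inv1 inv2 inv3]]]]] := paths _ _ _ _ adm1 adm2.
apply: (@walkS _ 2 _ (point_of (admissible_second_row inv2))); last by exists c, d, x2, y2.
apply: (@walkS _ 1 _ (point_of (admissible_second_row inv1))); last by exists a, b, c, d.
by apply: walkS; [apply: walk0|exists x1, y1, a, b].
Qed.

Lemma walk_geodesic n (P Q : point R) : walk n P Q -> exists m, (m <= n)%N /\ pdist P Q m.
Proof.
elim/ltn_ind: n => n IH W.
have [[k [lt_kn Wk]]|no_shorter] := classic (exists k, (k < n)%N /\ walk k P Q).
  have [m [le_mk dm]] := IH k lt_kn Wk.
  by exists m; split => //; apply: leq_trans le_mk (ltnW lt_kn).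
by exists n; split => //; split => // k lt_kn Wk; apply: no_shorter; exists k.
Qed.

Lemma cyc_self (x y : R) : cyc x y (x, y).
Proof. by exists 1; rewrite !mul1r. Qed.

Lemma cyc_eq (x y x' y' : R) : cyc x y = cyc x' y' -> exists k, x' = k * x /\ y' = k * y.
Proof. by move=> E; have := cyc_self x' y'; rewrite -E => -[k [-> ->]]; exists k. Qed.

(** If [a s = 1] then [(a,0)] is admissible: it is the first row of
    [a 0; 1 - s a, s], whose inverse is [s, 1 - s a; 0, a]. *)
Lemma admissible_left_factor (a s : R) : a * s = 1 -> admissible a 0.
Proof.
move=> as1; pose e := 1 - s * a.
have ae : a * e = 0 by rewrite mulrBr mulr1 mulrA as1 mul1r subrr.
have es : e * s = 0 by rewrite mulrBl mul1r -mulrA as1 mulr1 subrr.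
have ee : e * e = e by rewrite {1}/e mulrBl mul1r -mulrA ae mulr0 subr0.
exists e, s; apply: (@invertible2_by _ _ _ _ _ s e 0 a); mx2_ring;
  by rewrite ?as1 ?ae ?es ?ee ?subrK // addrC subrK.
Qed.

(** A walk [R(a1,0) ~ R(c,d) ~ R(a2,0)] forces [a2] to be left invertible when
    [a1] is: the first step makes [d] right invertible with [q = 0], and then
    the inverse of the second matrix yields a left inverse of [a2]. *)
Lemma two_steps_left_inverse (a1 r0 c d k a2 : R) : r0 * a1 = 1 ->
  invertible2 (mx2 a1 0 c d) -> invertible2 (mx2 (k * c) (k * d) a2 0) ->
  exists l, l * a2 = 1.
Proof.
move=> r0a1 /invertible2_inverse [p [q [r [t [[_ a1q _ cq_dt] _]]]]].
move=> /invertible2_inverse [p' [q' [r' [t' [_ [p'c_q'a2 p'd _ _]]]]]].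
rewrite mul0r addr0 in a1q; rewrite mulr0 addr0 in p'd.
have q0 : q = 0 by rewrite -[q]mul1r -r0a1 -mulrA a1q mulr0.
rewrite q0 mulr0 add0r in cq_dt.
have p'k0 : p' * k = 0 by rewrite -[p' * k]mulr1 -cq_dt mulrA -(mulrA p') p'd mul0r.
by exists q'; rewrite mulrA p'k0 mul0r add0r in p'c_q'a2.
Qed.

Definition base_point : point R := point_of (admissible_left_factor (mulr1 1)).

Lemma right_inverse_unique (a s l : R) : a * s = 1 -> l * a = 1 -> s * a = 1.
Proof. by move=> as1 la1; have <- : l = s by rewrite -[l]mulr1 -as1 mulrA la1 mul1r. Qed.

Lemma no_short_walk (a s : R) (as1 : a * s = 1) : s * a <> 1 ->
  forall m, (m < 3)%N -> ~ walk m base_point (point_of (admissible_left_factor as1)).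
Proof.
move=> sa1 m lt_m3 W.
have no_left_inverse l : l * a <> 1 by move/(right_inverse_unique as1).
have nontrivial : (1 : R) <> 0 by move=> one0; apply: sa1; rewrite -[s * a]mulr1 one0 mulr0.
case: m lt_m3 W => [|[|[|//]]] _ W.
- have [k [ka _]] := cyc_eq (esym (congr1 sval (walk0_eq W))).
  by apply: (no_left_inverse k); rewrite -ka.
- have [M [/walk0_eq <- [x [y [x' [y' [E1 [E2 inv]]]]]]]] := walkS_last W.
  have [k [_ y0]] := cyc_eq E1; have [k' [_ y'0]] := cyc_eq E2.
  move: inv; rewrite y0 y'0 !mulr0 => /invertible2_inverse [p [q [r [t [_ [_ _ _ one]]]]]].
  by apply: nontrivial; rewrite -one !mulr0 addr0.
- have [M2 [W1 [c' [d' [a2 [b2 [E3 [E4 inv2]]]]]]]] := walkS_last W.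
  have [M1 [/walk0_eq <- [a1 [b1 [c [d [E1 [E2 inv1]]]]]]]] := walkS_last W1.
  have [r0 [r0a1 _]] := cyc_eq (esym E1); have [k1 [_ b10]] := cyc_eq E1.
  have [m [a2E b20]] := cyc_eq E4; have [k [c'E d'E]] := cyc_eq (etrans (esym E2) E3).
  rewrite b10 mulr0 in inv1; rewrite c'E d'E b20 mulr0 in inv2.
  have [l la2] := two_steps_left_inverse (esym r0a1) inv1 inv2.
  by apply: (no_left_inverse (l * m)); rewrite -mulrA -a2E.
Qed.

End ProjectiveLine.

Unset Implicit Arguments.
Local Close Scope ring_scope.

Theorem mainTheorem8 (K : unitRingType) (U : lmodType K) :
  is_division_ring K -> infinite_dim U ->
  connected (endo U) /\ diameter_eq (endo U) 3.
Proof.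
move=> divK infU.
have walk3 : forall P Q : point (endo U), walk 3 P Q.
  by apply: walk3_of_path3; apply: path3_transport; apply: path3_from_base.
split; first by move=> P Q; exists 3.
split; first by move=> P Q; apply: walk_geodesic.
have [a [s [as1 sa1]]] := not_dedekind_finite divK infU.
exists (base_point _), (point_of (admissible_left_factor as1)).
by split; [apply: walk3|apply: no_short_walk].
Qed.
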